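(* Let $p$ be a positive continuous even function on $(-1,1)$ such that no nontrivial solution $u$ of $u''+pu=0$ has more than one zero in $(-1,1)$, and let $F$ be the solution of $\mathcal{S}F=2p$ with $F(0)=0$, $F'(0)=1$, $F''(0)=0$. If $\varphi:(-1,1)\to\mathbb{R}^n$ is a $C^3$ curve with $\varphi'(x)\neq0$ and $S_1\varphi(x)\le 2p(x)$ for all $x\in(-1,1)$, then $$\frac{|\varphi(x_1)-\varphi(x_2)|}{\{|\varphi'(x_1)|\,|\varphi'(x_2)|\}^{1/2}}\ \ge\ \frac{|F(x_1)-F(x_2)|}{\{F'(x_1)F'(x_2)\}^{1/2}}\qquad\text{for all } x_1,x_2\in(-1,1).$$
   Context: For a real function $g$ with $g'\neq0$, $\mathcal{S}g=(g''/g')'-\tfrac12(g''/g')^2$. Equivalently $F(x)=\int_0^x u_0(t)^{-2}dt$ where $u_0$ solves $u''+pu=0$, $u_0(0)=1$, $u_0'(0)=0$ (and $u_0$ has no zeros in $(-1,1)$). For a $C^3$ curve $\varphi$ into $\mathbb{R}^n$ with $\varphi'\neq0$, the Ahlfors Schwarzian is $S_1\varphi=\frac{\langle\varphi',\varphi'''\rangle}{|\varphi'|^2}-3\frac{\langle\varphi',\varphi''\rangle^2}{|\varphi'|^4}+\frac32\frac{|\varphi''|^2}{|\varphi'|^2}$, with Euclidean inner product and norm. *)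

From Stdlib Require Import Reals Lra.
Open Scope R_scope.

(* Points of R^n are represented as functions nat -> R, only the
   coordinates 0..n-1 being relevant. *)
Fixpoint dotn (n : nat) (u v : nat -> R) : R :=
  match n with
  | O => 0
  | S k => dotn k u v + u k * v k
  end.

Definition normn (n : nat) (u : nat -> R) : R := sqrt (dotn n u u).

Definition vsub (u v : nat -> R) : nat -> R := fun i => u i - v i.

Definition in_I (x : R) : Prop := -1 < x < 1.

(* Schwarzian of a real function g from its derivatives g', g'', g''':
   (g''/g')' - 1/2 (g''/g')^2 = g'''/g' - 3/2 (g''/g')^2. *)
Definition schwarzian (g1 g2 g3 : R) : R :=
  g3 / g1 - 3 / 2 * (g2 / g1) ^ 2.

Definition ahlfors_S1 (n : nat) (d1 d2 d3 : nat -> R) : R :=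
  dotn n d1 d3 / (normn n d1) ^ 2
  - 3 * (dotn n d1 d2) ^ 2 / (normn n d1) ^ 4
  + 3 / 2 * (normn n d2) ^ 2 / (normn n d1) ^ 2.

(* Fix a and let J(t) = |phi t - phi a|^2 F'(t) / |phi'(t)|.  Where J > 0,
   the hypothesis S_1 phi <= 2p = S F together with a Gram-determinant
   inequality for phi - phi a, phi', phi'' makes (sqrt J)' / F' nondecreasing:
   sqrt J is a convex function of F vanishing at a.  So sqrt J(u) / (F u - F a)
   increases with u, and since J(a + h) ~ h^2 |phi'(a)| F'(a) as h -> 0+, this
   gives |phi'(a)| (F b - F a)^2 <= J(b) F'(a), the theorem squared.  The same
   bound shows J cannot vanish on (a, b], which a continuation argument turns
   into the positivity needed along the way. *)

From Stdlib Require Import Reals Lra Lia Ranalysis5 Classical.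
Open Scope R_scope.

Lemma dpl_add f g x a b : derivable_pt_lim f x a -> derivable_pt_lim g x b ->
  derivable_pt_lim (fun t => f t + g t) x (a + b).
Proof. intros; now apply (derivable_pt_lim_plus f g). Qed.

Lemma dpl_sub f g x a b : derivable_pt_lim f x a -> derivable_pt_lim g x b ->
  derivable_pt_lim (fun t => f t - g t) x (a - b).
Proof. intros; now apply (derivable_pt_lim_minus f g). Qed.

Lemma dpl_mul f g x a b : derivable_pt_lim f x a -> derivable_pt_lim g x b ->
  derivable_pt_lim (fun t => f t * g t) x (a * g x + f x * b).
Proof. intros; now apply (derivable_pt_lim_mult f g). Qed.

Lemma dpl_div f g x a b : derivable_pt_lim f x a -> derivable_pt_lim g x b -> g x <> 0 ->
  derivable_pt_lim (fun t => f t / g t) x ((a * g x - b * f x) / (g x * g x)).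
Proof. intros; now apply (derivable_pt_lim_div f g). Qed.

Lemma dpl_const c x : derivable_pt_lim (fun _ => c) x 0.
Proof. apply derivable_pt_lim_const. Qed.

Lemma dpl_sqrt f x a : derivable_pt_lim f x a -> 0 < f x ->
  derivable_pt_lim (fun t => sqrt (f t)) x (a / (2 * sqrt (f x))).
Proof.
  intros Hf Hpos. replace (a / (2 * sqrt (f x))) with (/ (2 * sqrt (f x)) * a) by (unfold Rdiv; ring).
  apply (derivable_pt_lim_comp f sqrt); [exact Hf | now apply derivable_pt_lim_sqrt].
Qed.

Lemma dpl_eq f x a b : derivable_pt_lim f x a -> a = b -> derivable_pt_lim f x b.
Proof. now intros ? <-. Qed.

Lemma dpl_continuity_pt f x l : derivable_pt_lim f x l -> continuity_pt f x.
Proof. intros H. apply derivable_continuous_pt. now exists l. Qed.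

Lemma deriv_pos_increasing f f' a b :
  (forall x, a <= x <= b -> derivable_pt_lim f x (f' x)) ->
  (forall x, a <= x <= b -> 0 < f' x) ->
  forall x y, a <= x -> x < y -> y <= b -> f x < f y.
Proof.
  intros Hf Hpos x y Hx Hxy Hy.
  destruct (MVT_cor2 f f' x y Hxy) as [c [Ec Hc]]; [intros; apply Hf; lra|].
  assert (0 < f' c) by (apply Hpos; lra). nra.
Qed.

Lemma continuous_nonzero_pos f a b x0 :
  (forall x, a < x < b -> continuity_pt f x) -> (forall x, a < x < b -> f x <> 0) ->
  a < x0 < b -> 0 < f x0 -> forall x, a < x < b -> 0 < f x.
Proof.
  intros Hc Hnz Hx0 Hf0 x Hx.
  destruct (Rlt_le_dec 0 (f x)) as [|Hle]; [assumption|exfalso].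
  assert (Hneg : f x < 0) by (destruct Hle as [|E]; [assumption | now apply Hnz in E]).
  destruct (Rlt_le_dec x x0) as [Hlt|[Hlt|<-]]; [| |lra].
  - destruct (IVT_interv f x x0) as [z [Hz Ez]]; try assumption.
    { intros; apply Hc; lra. }
    apply (Hnz z); [lra | exact Ez].
  - destruct (IVT_interv (fun t => - f t) x0 x) as [z [Hz Ez]]; try lra.
    { intros; apply continuity_pt_opp, Hc; lra. }
    apply (Hnz z); lra.
Qed.

Lemma interval_continuation (Pr : R -> Prop) a b : a < b ->
  (exists d, 0 < d /\ forall s, a < s < a + d -> Pr s) ->
  (forall t, a < t <= b -> (forall s, a < s < t -> Pr s) -> Pr t) ->
  (forall t, a < t < b -> Pr t -> exists d, 0 < d /\ forall s, t < s < t + d -> Pr s) ->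
  forall t, a < t <= b -> Pr t.
Proof.
  intros Hab [d [Hd Hstart]] Hclose Hopen.
  pose (E t := a < t <= b /\ forall s, a < s < t -> Pr s).
  pose (t0 := Rmin (a + d / 2) b).
  assert (Ht0 : a < t0 <= b) by (unfold t0; split; [apply Rmin_glb_lt|apply Rmin_r]; lra).
  assert (Et0 : E t0).
  { split; [exact Ht0|]. intros s Hs. apply Hstart. unfold t0 in Hs.
    pose proof (Rmin_l (a + d / 2) b). lra. }
  assert (Ebound : bound E) by (exists b; intros t [Ht _]; lra).
  destruct (completeness E Ebound (ex_intro _ t0 Et0)) as [m [Hub Hlub]].
  assert (Hm : t0 <= m <= b) by (split; [now apply Hub | apply Hlub; intros t [Ht _]; lra]).
  assert (Hbelow : forall s, a < s < m -> Pr s).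
  { intros s Hs. apply NNPP. intros Hn.
    enough (m <= s) by lra.
    apply Hlub. intros t [Ht Hts]. apply Rnot_lt_le. intros Hst. apply Hn, Hts. lra. }
  assert (Hmb : m = b).
  { destruct (Rlt_le_dec m b) as [Hlt|]; [exfalso|lra].
    destruct (Hopen m) as [e [He Hright]]; [lra | apply Hclose; [lra | exact Hbelow] |].
    pose (t1 := Rmin (m + e / 2) b).
    assert (Hmt1 : m < t1) by (apply Rmin_glb_lt; lra).
    enough (Et1 : E t1) by (pose proof (Hub t1 Et1); lra).
    split; [split; [lra | apply Rmin_r]|].
    intros s Hs. destruct (Rlt_le_dec s m) as [|[Hsm|<-]].
    - apply Hbelow; lra.
    - apply Hright. unfold t1 in Hs. pose proof (Rmin_l (m + e / 2) b). lra.
    - apply Hclose; [lra | exact Hbelow]. }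
  subst m. intros t Ht. destruct (Rlt_le_dec t b); [apply Hbelow; lra|].
  replace t with b by lra. apply Hclose; [lra | exact Hbelow].
Qed.

Lemma dotn_comm n u v : dotn n u v = dotn n v u.
Proof. induction n; simpl; [ring | rewrite IHn; ring]. Qed.

Lemma dotn_ge0 n u : 0 <= dotn n u u.
Proof. induction n; simpl; nra. Qed.

Lemma dotn_vsub_self n u : dotn n (vsub u u) (vsub u u) = 0.
Proof. induction n; simpl; [reflexivity | rewrite IHn; unfold vsub; ring]. Qed.

Lemma dotn_vsub_sym n u v : dotn n (vsub u v) (vsub u v) = dotn n (vsub v u) (vsub v u).
Proof. induction n; simpl; [reflexivity | rewrite IHn; unfold vsub; ring]. Qed.

Lemma dotn_div_scalar n u h : h <> 0 ->
  dotn n (fun i => u i / h) (fun i => u i / h) = dotn n u u / (h * h).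
Proof. intros Hh. induction n; simpl; [|rewrite IHn]; field; exact Hh. Qed.

Lemma dotn_lincomb3 n (r d1 d2 : nat -> R) l m k :
  let v i := l * r i + m * d1 i + k * d2 i in
  dotn n v v = l*l*dotn n r r + m*m*dotn n d1 d1 + k*k*dotn n d2 d2
    + 2*l*m*dotn n r d1 + 2*l*k*dotn n r d2 + 2*m*k*dotn n d1 d2.
Proof. induction n; simpl in *; [ring | rewrite IHn; ring]. Qed.

Lemma dotn_derive n (U W : R -> nat -> R) U' W' x :
  (forall i, (i < n)%nat -> derivable_pt_lim (fun t => U t i) x (U' i)) ->
  (forall i, (i < n)%nat -> derivable_pt_lim (fun t => W t i) x (W' i)) ->
  derivable_pt_lim (fun t => dotn n (U t) (W t)) x (dotn n U' (W x) + dotn n (U x) W').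
Proof.
  induction n as [|n IH]; intros HU HW; simpl.
  - apply dpl_eq with 0; [apply dpl_const | ring].
  - eapply dpl_eq.
    + apply dpl_add; [apply IH | apply dpl_mul]; intros; (apply HU || apply HW); lia.
    + simpl; ring.
Qed.

Lemma normn_sqr n u : normn n u ^ 2 = dotn n u u.
Proof. unfold normn. rewrite pow2_sqrt; [reflexivity | apply dotn_ge0]. Qed.

Lemma ahlfors_S1_dotn n d1 d2 d3 :
  ahlfors_S1 n d1 d2 d3 = dotn n d1 d3 / dotn n d1 d1
    - 3 * dotn n d1 d2 ^ 2 / dotn n d1 d1 ^ 2 + 3 / 2 * dotn n d2 d2 / dotn n d1 d1.
Proof.
  unfold ahlfors_S1. replace (normn n d1 ^ 4) with ((normn n d1 ^ 2) ^ 2) by ring.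
  now rewrite !normn_sqr.
Qed.

Definition gram_defect Q A E P al be :=
  4*P*P*P*Q + 4*E*Q*P*P - 4*A*A*P*P + be*Q*Q*P - al*al*Q*Q - 4*A*al*Q*P.

(* [P * gram_defect] is the squared norm of [2P^2 r - (2PA + Q al) d1 + QP d2]. *)
Lemma gram_defect_nonneg n (r d1 d2 : nat -> R) :
  0 < dotn n d1 d1 ->
  0 <= gram_defect (dotn n r r) (dotn n r d1) (dotn n r d2)
                   (dotn n d1 d1) (dotn n d1 d2) (dotn n d2 d2).
Proof.
  intros HP. set (P := dotn n d1 d1) in *.
  pose proof (dotn_lincomb3 n r d1 d2 (2*P*P) (-2*P*dotn n r d1 - dotn n r r * dotn n d1 d2)
    (dotn n r r * P)) as E; simpl in E.
  pose proof (dotn_ge0 n (fun i => 2*P*P * r i + (-2*P*dotn n r d1 - dotn n r r * dotn n d1 d2) * d1 i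
     + dotn n r r * P * d2 i)) as Hsq.
  apply (Rmult_le_reg_r P); [exact HP|]. rewrite E in Hsq. unfold gram_defect, P in *. nra.
Qed.

(* Closed forms of J' and J'' for J := Q F1 / s, where s = sqrt P and
   Q' = 2 A, A' = P + E, P' = 2 al, al' = be + ga. *)
Definition distortion_d1 Q A P al F1 F2 s :=
  (2 * A * F1 + Q * F2) / s - Q * F1 * al / (P * s).

Definition distortion_d2 Q A E P al be ga F1 F2 F3 s :=
  (2 * (P + E) * F1 + 4 * A * F2 + Q * F3) / s
  - (2 * A * F1 + Q * F2) * al / (P * s)
  - (2 * A * F1 * al + Q * F2 * al + Q * F1 * (be + ga)) / (P * s)
  + 3 * Q * F1 * al * al / (P * P * s).

Lemma distortion_numerator_identity Q A E P al be ga F1 F2 F3 s :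
  0 < s -> P = s * s -> F1 <> 0 ->
  let J := Q * F1 / s in
  let J1 := distortion_d1 Q A P al F1 F2 s in
  2 * J * distortion_d2 Q A E P al be ga F1 F2 F3 s * F1 - J1 ^ 2 * F1 - 2 * J * J1 * F2
  = F1 ^ 3 * (gram_defect Q A E P al be / P ^ 3
      + 2 * Q ^ 2 / P * (schwarzian F1 F2 F3 - (ga / P - 3 * al ^ 2 / P ^ 2 + 3 / 2 * be / P))).
Proof.
  intros Hs HP HF1 J J1. unfold J, J1, distortion_d1, distortion_d2, gram_defect, schwarzian.
  subst P. field. lra.
Qed.

Lemma distortion_numerator_nonneg Q A E P al be ga F1 F2 F3 s :
  0 < s -> P = s * s -> 0 < F1 -> 0 <= gram_defect Q A E P al be ->
  ga / P - 3 * al ^ 2 / P ^ 2 + 3 / 2 * be / P <= schwarzian F1 F2 F3 ->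
  let J := Q * F1 / s in
  let J1 := distortion_d1 Q A P al F1 F2 s in
  0 <= 2 * J * distortion_d2 Q A E P al be ga F1 F2 F3 s * F1 - J1 ^ 2 * F1 - 2 * J * J1 * F2.
Proof.
  intros Hs HP HF1 Hgram HS J J1. unfold J, J1.
  rewrite distortion_numerator_identity by lra.
  assert (HP0 : 0 < P) by nra.
  apply Rmult_le_pos; [apply pow_le; lra|].
  apply Rplus_le_le_0_compat.
  - apply Rmult_le_pos; [exact Hgram | apply Rlt_le, Rinv_0_lt_compat, pow_lt, HP0].
  - apply Rmult_le_pos; [|lra].
    apply Rmult_le_pos; [nra | apply Rlt_le, Rinv_0_lt_compat, HP0].
Qed.

Lemma derive_sqrt_slope (J J1 G : R -> R) J2 G1 x :
  derivable_pt_lim J x (J1 x) -> derivable_pt_lim J1 x J2 -> derivable_pt_lim G x G1 ->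
  0 < J x -> 0 < G x ->
  derivable_pt_lim (fun t => J1 t / (2 * sqrt (J t) * G t)) x
    ((2 * J x * J2 * G x - J1 x ^ 2 * G x - 2 * J x * J1 x * G1)
      / (4 * J x * G x ^ 2 * sqrt (J x))).
Proof.
  intros dJ dJ1 dG HJ HG.
  assert (Hs : 0 < sqrt (J x)) by now apply sqrt_lt_R0.
  assert (HJs : J x = sqrt (J x) * sqrt (J x)) by (rewrite sqrt_sqrt; lra).
  eapply dpl_eq.
  - apply dpl_div; [exact dJ1 | apply dpl_mul; [apply dpl_mul; [apply dpl_const | apply dpl_sqrt; [exact dJ | exact HJ]] | exact dG] |].
    apply Rgt_not_eq. repeat apply Rmult_lt_0_compat; lra.
  - cbv beta. set (s := sqrt (J x)) in *. rewrite HJs. field. lra.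
Qed.

(* [H] is a convex function of [F] vanishing at [a]. *)
Lemma relative_slope_le H D D' F F1 a b :
  a < b ->
  (forall x, a <= x <= b -> derivable_pt_lim F x (F1 x)) ->
  (forall x, a <= x <= b -> 0 < F1 x) ->
  (forall x, a <= x <= b -> continuity_pt H x) ->
  H a = 0 ->
  (forall x, a < x < b -> derivable_pt_lim H x (D x * F1 x)) ->
  (forall x, a < x < b -> derivable_pt_lim D x (D' x)) ->
  (forall x, a < x < b -> 0 <= D' x) ->
  forall u, a < u < b -> H u * (F b - F a) <= H b * (F u - F a).
Proof.
  intros Hab HF HF1 CH Ha HH HD HD' u Hu.
  assert (CF : forall x, a <= x <= b -> continuity_pt F x)
    by (intros x Hx; apply (dpl_continuity_pt _ _ (F1 x)), HF, Hx).
  assert (Cauchy : forall x y, a <= x -> x < y -> y <= b ->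
    exists c, x < c < y /\ H y - H x = D c * (F y - F x)).
  { intros x y Hx Hxy Hy.
    destruct (MVT H F x y (fun c P => exist _ _ (HH c ltac:(lra)))
                           (fun c P => exist _ _ (HF c ltac:(lra))) Hxy)
      as [c [Pc Ec]]; [intros; apply CH; lra | intros; apply CF; lra |].
    simpl in Ec. exists c. split; [exact Pc|].
    apply Rmult_eq_reg_r with (F1 c); [nra | apply Rgt_not_eq, HF1; lra]. }
  destruct (Cauchy a u) as [x1 [Hx1 E1]]; try lra.
  destruct (Cauchy u b) as [x2 [Hx2 E2]]; try lra.
  assert (Hx12 : x1 < x2) by lra.
  destruct (MVT_cor2 D D' x1 x2 Hx12) as [c [E3 Hc]]; [intros; apply HD; lra|].
  assert (0 <= D' c) by (apply HD'; lra).
  pose proof (deriv_pos_increasing F F1 a b HF HF1) as Finc.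
  assert (F a < F u) by (apply Finc; lra).
  assert (F u < F b) by (apply Finc; lra).
  assert (D x1 <= D x2) by nra.
  assert (0 <= (F u - F a) * (F b - F u) * (D x2 - D x1))
    by (repeat apply Rmult_le_pos; lra).
  rewrite Ha in E1.
  replace (H b) with (D x1 * (F u - F a) + D x2 * (F b - F u)) by lra.
  replace (H u) with (D x1 * (F u - F a)) by lra. nra.
Qed.

Definition right_limit (f : R -> R) (l : R) : Prop :=
  limit1_in f (fun h => 0 < h) l 0.

Lemma right_limit_shift f a : continuity_pt f a -> right_limit (fun h => f (a + h)) (f a).
Proof.
  intros Hf eps Heps. destruct (Hf eps Heps) as [d [Hd Hclose]].
  exists d; split; [exact Hd|]. intros h [Hh Hdh]. simpl in *. unfold Rdist in *.
  apply Hclose. split; [split; [constructor | lra]|].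
  simpl; unfold Rdist. now replace (a + h - a) with (h - 0) by ring.
Qed.

Lemma right_limit_diff_quotient f a l :
  derivable_pt_lim f a l -> right_limit (fun h => (f (a + h) - f a) / h) l.
Proof.
  intros Hf eps Heps. destruct (Hf eps Heps) as [d Hd].
  exists d; split; [apply cond_pos|]. intros h [Hh Hdh]. simpl in *. unfold Rdist in *.
  apply Hd; [lra | now replace h with (h - 0) by ring].
Qed.

Lemma right_limit_ext f g l :
  (forall h, 0 < h -> f h = g h) -> right_limit f l -> right_limit g l.
Proof.
  intros E Hf eps Heps. destruct (Hf eps Heps) as [d [Hd Hclose]].
  exists d; split; [exact Hd|]. intros h [Hh Hdh]. rewrite <- E by exact Hh.
  now apply Hclose.
Qed.

Lemma right_limit_close f l eps : right_limit f l -> 0 < eps ->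
  exists d, 0 < d /\ forall h, 0 < h < d -> l - eps < f h < l + eps.
Proof.
  intros Hf Heps. destruct (Hf eps Heps) as [d [Hd Hclose]].
  exists d; split; [exact Hd|]. intros h Hh.
  assert (Habs : Rabs (f h - l) < eps).
  { apply Hclose. split; [lra|]. simpl; unfold Rdist. rewrite Rminus_0_r, Rabs_pos_eq; lra. }
  apply Rabs_def2 in Habs. lra.
Qed.

Lemma right_limit_le f g A B : right_limit f A -> right_limit g B ->
  (exists d, 0 < d /\ forall h, 0 < h < d -> f h <= g h) -> A <= B.
Proof.
  intros Hf Hg [d [Hd Hle]]. apply Rnot_lt_le. intros HBA.
  destruct (right_limit_close f A ((A - B) / 2) Hf) as [d1 [Hd1 H1]]; [lra|].
  destruct (right_limit_close g B ((A - B) / 2) Hg) as [d2 [Hd2 H2]]; [lra|].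
  set (h := Rmin d (Rmin d1 d2) / 2).
  assert (Hm : 0 < Rmin d (Rmin d1 d2)) by (repeat apply Rmin_pos; assumption).
  pose proof (Rmin_l d (Rmin d1 d2)). pose proof (Rmin_r d (Rmin d1 d2)).
  pose proof (Rmin_l d1 d2). pose proof (Rmin_r d1 d2).
  specialize (H1 h ltac:(unfold h; lra)). specialize (H2 h ltac:(unfold h; lra)).
  specialize (Hle h ltac:(unfold h; lra)). lra.
Qed.

Lemma right_limit_dotn n (U W : R -> nat -> R) u w :
  (forall i, (i < n)%nat -> right_limit (fun h => U h i) (u i)) ->
  (forall i, (i < n)%nat -> right_limit (fun h => W h i) (w i)) ->
  right_limit (fun h => dotn n (U h) (W h)) (dotn n u w).
Proof.
  induction n as [|n IH]; intros HU HW; simpl.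
  - exact (limit_free (fun _ => 0) _ 0 0).
  - apply limit_plus; [apply IH | apply limit_mul]; intros; (apply HU || apply HW); lia.
Qed.

Lemma continuity_pt_pos_right f x : continuity_pt f x -> 0 < f x ->
  exists d, 0 < d /\ forall s, x < s < x + d -> 0 < f s.
Proof.
  intros Hc Hx.
  destruct (right_limit_close _ _ (f x) (right_limit_shift f x Hc) Hx) as [d [Hd Hclose]].
  exists d; split; [exact Hd|]. intros s Hs.
  specialize (Hclose (s - x) ltac:(lra)). replace (x + (s - x)) with s in Hclose by ring. lra.
Qed.

Lemma in_I_between a b x : in_I a -> in_I b -> a <= x <= b -> in_I x.
Proof. unfold in_I; lra. Qed.

Section ChordComparison.

Variable n : nat.
Variables phi phi1 phi2 phi3 : R -> nat -> R.
Hypothesis hphi1 : forall i x, (i < n)%nat -> in_I x ->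
  derivable_pt_lim (fun t => phi t i) x (phi1 x i).
Hypothesis hphi2 : forall i x, (i < n)%nat -> in_I x ->
  derivable_pt_lim (fun t => phi1 t i) x (phi2 x i).
Hypothesis hphi3 : forall i x, (i < n)%nat -> in_I x ->
  derivable_pt_lim (fun t => phi2 t i) x (phi3 x i).
Hypothesis hphi1_nz : forall x, in_I x -> normn n (phi1 x) <> 0.

Variables F F1 F2 F3 : R -> R.
Hypothesis hF1 : forall x, in_I x -> derivable_pt_lim F x (F1 x).
Hypothesis hF2 : forall x, in_I x -> derivable_pt_lim F1 x (F2 x).
Hypothesis hF3 : forall x, in_I x -> derivable_pt_lim F2 x (F3 x).
Hypothesis hF1_pos : forall x, in_I x -> 0 < F1 x.

Hypothesis hS1_le : forall x, in_I x ->
  ahlfors_S1 n (phi1 x) (phi2 x) (phi3 x) <= schwarzian (F1 x) (F2 x) (F3 x).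

Definition chord2 a t := dotn n (vsub (phi t) (phi a)) (vsub (phi t) (phi a)).
Definition chord_vel a t := dotn n (vsub (phi t) (phi a)) (phi1 t).
Definition chord_acc a t := dotn n (vsub (phi t) (phi a)) (phi2 t).
Definition speed2 t := dotn n (phi1 t) (phi1 t).
Definition vel_acc t := dotn n (phi1 t) (phi2 t).
Definition acc2 t := dotn n (phi2 t) (phi2 t).
Definition vel_jerk t := dotn n (phi1 t) (phi3 t).

(* Squared, the theorem at (a, b) reads
   [(F b - F a)^2 <= distortion a b * F1 a / sqrt (speed2 a)]. *)
Definition distortion a t := chord2 a t * F1 t / sqrt (speed2 t).

Definition distortion' a t :=
  distortion_d1 (chord2 a t) (chord_vel a t) (speed2 t) (vel_acc t) (F1 t) (F2 t)
    (sqrt (speed2 t)).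

Definition distortion'' a t :=
  distortion_d2 (chord2 a t) (chord_vel a t) (chord_acc a t) (speed2 t) (vel_acc t)
    (acc2 t) (vel_jerk t) (F1 t) (F2 t) (F3 t) (sqrt (speed2 t)).

Lemma speed2_pos x : in_I x -> 0 < speed2 x.
Proof.
  intros Ix. destruct (dotn_ge0 n (phi1 x)) as [|E]; [assumption|exfalso].
  apply (hphi1_nz x Ix). unfold normn. rewrite <- E. apply sqrt_0.
Qed.

Lemma chord_derivatives a x : in_I x ->
  derivable_pt_lim (chord2 a) x (2 * chord_vel a x) /\
  derivable_pt_lim (chord_vel a) x (speed2 x + chord_acc a x) /\
  derivable_pt_lim speed2 x (2 * vel_acc x) /\
  derivable_pt_lim vel_acc x (acc2 x + vel_jerk x).
Proof.
  intros Ix.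
  assert (Hr : forall i, (i < n)%nat ->
    derivable_pt_lim (fun t => vsub (phi t) (phi a) i) x (phi1 x i)).
  { intros i Hi. unfold vsub. apply dpl_eq with (phi1 x i - 0);
      [apply dpl_sub; [now apply hphi1 | apply dpl_const] | ring]. }
  assert (H1 : forall i, (i < n)%nat -> derivable_pt_lim (fun t => phi1 t i) x (phi2 x i))
    by (intros; now apply hphi2).
  assert (H2 : forall i, (i < n)%nat -> derivable_pt_lim (fun t => phi2 t i) x (phi3 x i))
    by (intros; now apply hphi3).
  unfold chord2, chord_vel, chord_acc, speed2, vel_acc, acc2, vel_jerk.
  repeat split; (eapply dpl_eq; [apply dotn_derive; eassumption | cbv beta]).
  - rewrite (dotn_comm n (phi1 x)). ring.
  - reflexivity.
  - rewrite (dotn_comm n (phi2 x)). ring.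
  - reflexivity.
Qed.

Lemma distortion_derivatives a x : in_I x ->
  derivable_pt_lim (distortion a) x (distortion' a x) /\
  derivable_pt_lim (distortion' a) x (distortion'' a x).
Proof.
  intros Ix. destruct (chord_derivatives a x Ix) as [dQ [dA [dP dal]]].
  assert (HP := speed2_pos x Ix).
  assert (ds := dpl_sqrt _ x _ dP HP).
  assert (Hs : 0 < sqrt (speed2 x)) by now apply sqrt_lt_R0.
  assert (HPs : speed2 x = sqrt (speed2 x) * sqrt (speed2 x)) by (rewrite sqrt_sqrt; lra).
  unfold distortion, distortion', distortion'', distortion_d1, distortion_d2. split.
  - eapply dpl_eq; [apply dpl_div; [apply dpl_mul; [exact dQ | now apply hF2] | exact ds | lra]|].
    cbv beta. set (s := sqrt (speed2 x)) in *. rewrite HPs. field. lra.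
  - eapply dpl_eq.
    + apply dpl_sub.
      * apply dpl_div; [|exact ds|lra].
        apply dpl_add; apply dpl_mul; try apply dpl_mul; try apply dpl_const;
          (exact dQ || exact dA || now apply hF2 || now apply hF3).
      * apply dpl_div; [|apply dpl_mul; [exact dP | exact ds]|].
        { apply dpl_mul; [apply dpl_mul; [exact dQ | now apply hF2] | exact dal]. }
        apply Rgt_not_eq, Rmult_lt_0_compat; lra.
    + cbv beta. set (s := sqrt (speed2 x)) in *. rewrite HPs. field. lra.
Qed.

Lemma distortion_numerator_nonneg_at a x : in_I x ->
  0 <= 2 * distortion a x * distortion'' a x * F1 x - distortion' a x ^ 2 * F1 x
       - 2 * distortion a x * distortion' a x * F2 x.
Proof.
  intros Ix. assert (HP := speed2_pos x Ix).
  apply distortion_numerator_nonneg.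
  - now apply sqrt_lt_R0.
  - rewrite sqrt_sqrt; lra.
  - now apply hF1_pos.
  - now apply gram_defect_nonneg.
  - unfold vel_jerk, vel_acc, acc2, speed2. rewrite <- ahlfors_S1_dotn. now apply hS1_le.
Qed.


Lemma distortion_ge0 a x : in_I x -> 0 <= distortion a x.
Proof.
  intros Ix. unfold distortion. apply Rmult_le_pos.
  - apply Rmult_le_pos; [apply dotn_ge0 | now apply Rlt_le, hF1_pos].
  - apply Rlt_le, Rinv_0_lt_compat, sqrt_lt_R0, speed2_pos, Ix.
Qed.

Lemma sqrt_distortion_secant a b : in_I a -> in_I b -> a < b ->
  (forall s, a < s < b -> 0 < chord2 a s) ->
  forall u, a < u < b ->
  sqrt (distortion a u) * (F b - F a) <= sqrt (distortion a b) * (F u - F a).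
Proof.
  intros Ia Ib Hab Hpos.
  assert (inI : forall x, a <= x <= b -> in_I x) by (intros x Hx; now apply (in_I_between a b)).
  assert (Jpos : forall x, a < x < b -> 0 < distortion a x).
  { intros x Hx. assert (Ix := inI x ltac:(lra)). unfold distortion.
    apply Rdiv_lt_0_compat; [apply Rmult_lt_0_compat; [now apply Hpos | now apply hF1_pos]|].
    apply sqrt_lt_R0, speed2_pos, Ix. }
  apply (relative_slope_le (fun t => sqrt (distortion a t))
    (fun t => distortion' a t / (2 * sqrt (distortion a t) * F1 t))
    (fun t => (2 * distortion a t * distortion'' a t * F1 t - distortion' a t ^ 2 * F1 t
               - 2 * distortion a t * distortion' a t * F2 t)
              / (4 * distortion a t * F1 t ^ 2 * sqrt (distortion a t)))
    F F1 a b Hab).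
  - intros; apply hF1, inI; assumption.
  - intros; apply hF1_pos, inI; assumption.
  - intros x Hx. apply (continuity_pt_comp (distortion a) sqrt).
    + apply (dpl_continuity_pt _ _ (distortion' a x)), distortion_derivatives, inI, Hx.
    + apply continuity_pt_sqrt, distortion_ge0, inI, Hx.
  - unfold distortion, chord2. rewrite dotn_vsub_self. unfold Rdiv. rewrite !Rmult_0_l. apply sqrt_0.
  - intros x Hx. assert (Ix := inI x ltac:(lra)).
    assert (HJ := Jpos x Hx). assert (HF := hF1_pos x Ix).
    assert (0 < sqrt (distortion a x)) by now apply sqrt_lt_R0.
    eapply dpl_eq; [apply dpl_sqrt; [apply distortion_derivatives, Ix | exact HJ]|].
    field. lra.
  - intros x Hx. assert (Ix := inI x ltac:(lra)).
    destruct (distortion_derivatives a x Ix) as [dJ dJ'].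
    apply derive_sqrt_slope; [exact dJ | exact dJ' | now apply hF2 | now apply Jpos | now apply hF1_pos].
  - intros x Hx. assert (Ix := inI x ltac:(lra)).
    assert (HJ := Jpos x Hx). assert (HF := hF1_pos x Ix).
    assert (0 < sqrt (distortion a x)) by now apply sqrt_lt_R0.
    apply Rmult_le_pos; [now apply distortion_numerator_nonneg_at|].
    apply Rlt_le, Rinv_0_lt_compat.
    apply Rmult_lt_0_compat; [apply Rmult_lt_0_compat; [|apply pow_lt]|]; lra.
Qed.

Lemma chord2_quotient_limit a : in_I a ->
  right_limit (fun h => chord2 a (a + h) / (h * h)) (speed2 a).
Proof.
  intros Ia.
  apply right_limit_ext with
    (fun h => dotn n (fun i => (phi (a + h) i - phi a i) / h) (fun i => (phi (a + h) i - phi a i) / h)).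
  { intros h Hh. rewrite dotn_div_scalar by lra. reflexivity. }
  apply right_limit_dotn; intros i Hi;
    apply (right_limit_diff_quotient (fun t => phi t i)), hphi1; assumption.
Qed.

Lemma distortion_quotient_limit a : in_I a ->
  right_limit (fun h => distortion a (a + h) / (h * h)) (sqrt (speed2 a) * F1 a).
Proof.
  intros Ia. assert (HPa := speed2_pos a Ia).
  assert (Hs : sqrt (speed2 a) * F1 a = speed2 a * (F1 a * / sqrt (speed2 a))).
  { rewrite <- (sqrt_sqrt (speed2 a)) at 2 by lra. field. apply Rgt_not_eq, sqrt_lt_R0, HPa. }
  rewrite Hs.
  apply right_limit_ext with
    (fun h => chord2 a (a + h) / (h * h) * (F1 (a + h) * / sqrt (speed2 (a + h)))).
  { intros h Hh. unfold distortion, Rdiv. ring. }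
  apply limit_mul; [now apply chord2_quotient_limit | apply limit_mul].
  - apply right_limit_shift, (dpl_continuity_pt _ _ (F2 a)), hF2, Ia.
  - apply limit_inv; [|apply Rgt_not_eq, sqrt_lt_R0, HPa].
    apply (right_limit_shift (fun t => sqrt (speed2 t))).
    destruct (chord_derivatives a a Ia) as [_ [_ [dP _]]].
    apply (dpl_continuity_pt _ _ _ (dpl_sqrt _ a _ dP HPa)).
Qed.

Lemma distortion_quotient_secant a b : in_I a -> in_I b -> a < b ->
  (forall s, a < s < b -> 0 < chord2 a s) ->
  forall h, 0 < h < b - a ->
  distortion a (a + h) / (h * h) * (F b - F a) ^ 2
    <= distortion a b * ((F (a + h) - F a) / h * ((F (a + h) - F a) / h)).
Proof.
  intros Ia Ib Hab Hpos h Hh.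
  assert (inI : forall x, a <= x <= b -> in_I x) by (intros x Hx; now apply (in_I_between a b)).
  assert (S := sqrt_distortion_secant a b Ia Ib Hab Hpos (a + h) ltac:(lra)).
  assert (Hab' : F a < F b).
  { apply (deriv_pos_increasing F F1 a b); try lra;
      intros x Hx; [apply hF1 | apply hF1_pos]; now apply inI. }
  assert (S0 : 0 <= sqrt (distortion a (a + h)) * (F b - F a))
    by (apply Rmult_le_pos; [apply sqrt_pos | lra]).
  assert (Sq := Rmult_le_compat _ _ _ _ S0 S0 S S).
  rewrite <- (sqrt_sqrt (distortion a (a + h))), <- (sqrt_sqrt (distortion a b))
    by (apply distortion_ge0, inI; lra).
  apply (Rmult_le_reg_r (h * h)); [nra|].
  replace (_ * (h * h)) with (sqrt (distortion a (a + h)) * (F b - F a)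
    * (sqrt (distortion a (a + h)) * (F b - F a))) by (field; lra).
  replace (_ * (h * h)) with (sqrt (distortion a b) * (F (a + h) - F a)
    * (sqrt (distortion a b) * (F (a + h) - F a))) by (field; lra).
  exact Sq.
Qed.

Lemma distortion_bound_of_pos a b : in_I a -> in_I b -> a < b ->
  (forall s, a < s < b -> 0 < chord2 a s) ->
  sqrt (speed2 a) * (F b - F a) ^ 2 <= distortion a b * F1 a.
Proof.
  intros Ia Ib Hab Hpos. assert (HFa := hF1_pos a Ia).
  assert (Hle : sqrt (speed2 a) * F1 a * (F b - F a) ^ 2 <= distortion a b * (F1 a * F1 a)).
  { apply (right_limit_le (fun h => distortion a (a + h) / (h * h) * (F b - F a) ^ 2)
      (fun h => distortion a b * ((F (a + h) - F a) / h * ((F (a + h) - F a) / h)))).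
    - apply limit_mul; [now apply distortion_quotient_limit|].
      apply (limit_free (fun _ => (F b - F a) ^ 2) _ 0 0).
    - apply limit_mul; [apply (limit_free (fun _ => distortion a b) _ 0 0) | apply limit_mul];
        apply right_limit_diff_quotient, hF1, Ia.
    - exists (b - a). split; [lra | now apply distortion_quotient_secant]. }
  apply (Rmult_le_reg_r (F1 a) _ _ HFa). lra.
Qed.

(* The secant bound itself forces [chord2 a t > 0] wherever it has held on
   (a, t), so [phi] cannot return to [phi a]. *)
Lemma chord2_pos a b : in_I a -> in_I b -> a < b ->
  forall t, a < t <= b -> 0 < chord2 a t.
Proof.
  intros Ia Ib Hab.
  assert (inI : forall x, a <= x <= b -> in_I x) by (intros x Hx; now apply (in_I_between a b)).
  apply interval_continuation; [exact Hab | | |].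
  - assert (HPa := speed2_pos a Ia).
    destruct (right_limit_close _ _ (speed2 a) (chord2_quotient_limit a Ia) HPa)
      as [d [Hd Hclose]].
    exists d; split; [exact Hd|]. intros s Hs.
    specialize (Hclose (s - a) ltac:(lra)). replace (a + (s - a)) with s in Hclose by ring.
    assert (Hh : 0 < (s - a) * (s - a)) by nra.
    replace (chord2 a s) with (chord2 a s / ((s - a) * (s - a)) * ((s - a) * (s - a)))
      by (field; lra).
    apply Rmult_lt_0_compat; lra.
  - intros t Ht Hbelow. assert (It := inI t ltac:(lra)).
    assert (Hbound := distortion_bound_of_pos a t Ia It (proj1 Ht) Hbelow).
    assert (F a < F t) by (apply (deriv_pos_increasing F F1 a b); try lra;
      intros x Hx; [apply hF1 | apply hF1_pos]; now apply inI).
    assert (0 < sqrt (speed2 a) * (F t - F a) ^ 2)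
      by (apply Rmult_lt_0_compat; [apply sqrt_lt_R0, speed2_pos, Ia | apply pow_lt; lra]).
    destruct (dotn_ge0 n (vsub (phi t) (phi a))) as [|E]; [assumption|exfalso].
    unfold distortion, chord2 in Hbound. rewrite <- E in Hbound.
    unfold Rdiv in Hbound. rewrite !Rmult_0_l in Hbound. lra.
  - intros t Ht Hpos. apply continuity_pt_pos_right; [|exact Hpos].
    destruct (chord_derivatives a t (inI t ltac:(lra))) as [dQ _].
    exact (dpl_continuity_pt _ _ _ dQ).
Qed.

Lemma distortion_bound a b : in_I a -> in_I b -> a < b ->
  sqrt (speed2 a) * (F b - F a) ^ 2 <= distortion a b * F1 a.
Proof.
  intros Ia Ib Hab. apply distortion_bound_of_pos; try assumption.
  intros s Hs. apply (chord2_pos a b); lra || assumption.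
Qed.

Lemma normalized_chord_ge_lt a b : in_I a -> in_I b -> a < b ->
  normn n (vsub (phi a) (phi b)) / sqrt (normn n (phi1 a) * normn n (phi1 b))
    >= Rabs (F a - F b) / sqrt (F1 a * F1 b).
Proof.
  intros Ia Ib Hab.
  assert (K := distortion_bound a b Ia Ib Hab).
  assert (Fa := hF1_pos a Ia). assert (Fb := hF1_pos b Ib).
  assert (sa := sqrt_lt_R0 _ (speed2_pos a Ia)). assert (sb := sqrt_lt_R0 _ (speed2_pos b Ib)).
  unfold normn. rewrite dotn_vsub_sym. fold (chord2 a b) (speed2 a) (speed2 b).
  unfold distortion in K.
  set (Q := chord2 a b) in *. set (Sa := sqrt (speed2 a)) in *. set (Sb := sqrt (speed2 b)) in *.
  rewrite <- sqrt_Rsqr_abs, <- !sqrt_div_alt by (apply Rmult_lt_0_compat; assumption).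
  apply Rle_ge, sqrt_le_1_alt. unfold Rsqr.
  apply (Rmult_le_reg_r (F1 a * F1 b * (Sa * Sb))); [repeat apply Rmult_lt_0_compat; assumption|].
  replace ((F a - F b) * (F a - F b) / (F1 a * F1 b) * (F1 a * F1 b * (Sa * Sb)))
    with (Sa * (F b - F a) ^ 2 * Sb) by (field; lra).
  replace (Q / (Sa * Sb) * (F1 a * F1 b * (Sa * Sb)))
    with (Q * F1 b / Sb * F1 a * Sb) by (field; lra).
  apply Rmult_le_compat_r; lra.
Qed.

Lemma normalized_chord_ge x1 x2 : in_I x1 -> in_I x2 ->
  normn n (vsub (phi x1) (phi x2)) / sqrt (normn n (phi1 x1) * normn n (phi1 x2))
    >= Rabs (F x1 - F x2) / sqrt (F1 x1 * F1 x2).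
Proof.
  intros I1 I2. destruct (Rtotal_order x1 x2) as [H|[<-|H]].
  - now apply normalized_chord_ge_lt.
  - rewrite Rminus_diag, Rabs_R0. unfold Rdiv. rewrite Rmult_0_l.
    apply Rle_ge, Rmult_le_pos; [apply sqrt_pos|].
    apply Rlt_le, Rinv_0_lt_compat, sqrt_lt_R0.
    assert (0 <= normn n (phi1 x1)) by apply sqrt_pos.
    assert (normn n (phi1 x1) <> 0) by now apply hphi1_nz.
    nra.
  - unfold normn. rewrite dotn_vsub_sym. fold (normn n (vsub (phi x2) (phi x1))).
    rewrite Rabs_minus_sym, (Rmult_comm (normn n (phi1 x1))), (Rmult_comm (F1 x1)).
    now apply normalized_chord_ge_lt.
Qed.

End ChordComparison.

Theorem theorem2
  (p : R -> R)
  (hp_pos : forall x, in_I x -> 0 < p x)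
  (hp_cont : forall x, in_I x -> continuity_pt p x)
  (hp_even : forall x, in_I x -> p (- x) = p x)
  (hp_disc : forall u u1 u2 : R -> R,
      (forall x, in_I x -> derivable_pt_lim u x (u1 x)) ->
      (forall x, in_I x -> derivable_pt_lim u1 x (u2 x)) ->
      (forall x, in_I x -> u2 x + p x * u x = 0) ->
      (exists x, in_I x /\ u x <> 0) ->
      forall a b, in_I a -> in_I b -> u a = 0 -> u b = 0 -> a = b)
  (F F1 F2 F3 : R -> R)
  (hF1 : forall x, in_I x -> derivable_pt_lim F x (F1 x))
  (hF2 : forall x, in_I x -> derivable_pt_lim F1 x (F2 x))
  (hF3 : forall x, in_I x -> derivable_pt_lim F2 x (F3 x))
  (hF1nz : forall x, in_I x -> F1 x <> 0)
  (hFS : forall x, in_I x -> schwarzian (F1 x) (F2 x) (F3 x) = 2 * p x)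
  (hF0 : F 0 = 0) (hF10 : F1 0 = 1) (hF20 : F2 0 = 0)
  (n : nat)
  (phi phi1 phi2 phi3 : R -> nat -> R)
  (hphi1 : forall i x, (i < n)%nat -> in_I x ->
      derivable_pt_lim (fun t => phi t i) x (phi1 x i))
  (hphi2 : forall i x, (i < n)%nat -> in_I x ->
      derivable_pt_lim (fun t => phi1 t i) x (phi2 x i))
  (hphi3 : forall i x, (i < n)%nat -> in_I x ->
      derivable_pt_lim (fun t => phi2 t i) x (phi3 x i))
  (hphi3c : forall i x, (i < n)%nat -> in_I x ->
      continuity_pt (fun t => phi3 t i) x)
  (hphi1nz : forall x, in_I x -> normn n (phi1 x) <> 0)
  (hS1 : forall x, in_I x ->
      ahlfors_S1 n (phi1 x) (phi2 x) (phi3 x) <= 2 * p x) :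
  forall x1 x2, in_I x1 -> in_I x2 ->
    normn n (vsub (phi x1) (phi x2))
      / sqrt (normn n (phi1 x1) * normn n (phi1 x2))
    >= Rabs (F x1 - F x2) / sqrt (F1 x1 * F1 x2).
Proof.
  assert (hF1_pos : forall x, in_I x -> 0 < F1 x).
  { apply (continuous_nonzero_pos F1 (-1) 1 0); [| exact hF1nz | unfold in_I; lra | lra].
    intros x Ix. exact (dpl_continuity_pt _ _ _ (hF2 x Ix)). }
  apply (normalized_chord_ge n phi phi1 phi2 phi3 hphi1 hphi2 hphi3 hphi1nz
           F F1 F2 F3 hF1 hF2 hF3 hF1_pos).
  intros x Ix. rewrite hFS by exact Ix. now apply hS1.
Qed.
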